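(* Let $R$ be a subring of a ring $S$, and assume that every semiprime factor ring of $R$ and of $S$ is left or right Goldie and that the prime radical of every factor ring of $R$ and of $S$ is nilpotent. Then for every $P\in\operatorname{Spec} S$ there exists $Q\in\operatorname{Spec} R$ such that $Q$ is minimal over $P\cap R$ and $Q^S\subseteq P$.
   Context: For an ideal $Q$ of $R$, $Q^S=\operatorname{ann}_S(S/SQ)$, the annihilator of the left $S$-module $S/SQ$. *)

(* Factor rings R/I are
   handled internally: every notion "of the factor ring R/I" is expressed
   through its standard correspondence with subsets of R containing I. *)
From mathcomp Require Import all_boot all_order all_algebra.
Set Implicit Arguments. Unset Strict Implicit. Unset Printing Implicit Defensive.
Import GRing.Theory.
Local Open Scope ring_scope.

Section RingNotions.
Variable T : nzRingType.
Implicit Types (I J K L X : T -> Prop).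

Definition subP (A B : T -> Prop) : Prop := forall x, A x -> B x.

Definition is_ideal I : Prop :=
  [/\ I 0, (forall x y, I x -> I y -> I (x + y)), (forall x, I x -> I (- x)),
      (forall a x, I x -> I (a * x)) & (forall a x, I x -> I (x * a))].

Definition is_left_ideal L : Prop :=
  [/\ L 0, (forall x y, L x -> L y -> L (x + y)), (forall x, L x -> L (- x))
      & (forall a x, L x -> L (a * x))].

(* prime ideal: proper, and J K ⊆ P implies J ⊆ P or K ⊆ P for ideals J K
   (J K ⊆ P iff all products j k lie in P) *)
Definition prime_ideal P : Prop :=
  [/\ is_ideal P, ~ P 1 &
      forall J K, is_ideal J -> is_ideal K ->
        (forall j k, J j -> K k -> P (j * k)) -> subP J P \/ subP K P].

(* I is an ideal such that R/I is a semiprime ring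
   (no nonzero ideal of R/I has zero square) *)
Definition semiprime_ideal I : Prop :=
  is_ideal I /\
  forall J, is_ideal J -> subP I J ->
    (forall a b, J a -> J b -> I (a * b)) -> subP J I.

(* left annihilator, in R/I, of the image of X (as a subset of R) *)
Definition lann_mod I X : T -> Prop := fun r => forall x, X x -> I (r * x).

(* R/I is left Goldie: ACC on left annihilators and no infinite direct sum
   of nonzero left ideals *)
Definition left_goldie_mod I : Prop :=
  (forall X : nat -> (T -> Prop),
     (forall n, subP (lann_mod I (X n)) (lann_mod I (X n.+1))) ->
     exists n0, forall n, (n0 <= n)%N -> subP (lann_mod I (X n)) (lann_mod I (X n0)))
  /\
  ~ (exists L : nat -> (T -> Prop),
       [/\ (forall i, is_left_ideal (L i) /\ subP I (L i)),
           (forall i, exists x, L i x /\ ~ I x) &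
           (forall (n : nat) (x : nat -> T),
              (forall i, (i < n)%N -> L i (x i)) ->
              I (\sum_(i < n) x i) -> forall i, (i < n)%N -> I (x i))]).

Definition prime_radical_mod I : T -> Prop :=
  fun x => forall P, prime_ideal P -> subP I P -> P x.

Definition nilpotent_mod I (N : T -> Prop) : Prop :=
  exists n : nat, forall x : nat -> T,
    (forall i, (i < n)%N -> N (x i)) -> I (\prod_(i < n) x i).

End RingNotions.

Definition right_goldie_mod (T : nzRingType) (I : T -> Prop) : Prop :=
  @left_goldie_mod (T^c)%type I.

Definition goldie_hyp (T : nzRingType) : Prop :=
  forall I : T -> Prop, semiprime_ideal I ->
    left_goldie_mod I \/ right_goldie_mod I.

Definition nilradical_hyp (T : nzRingType) : Prop :=
  forall I : T -> Prop, is_ideal I -> nilpotent_mod I (prime_radical_mod I).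

Definition minimal_prime_over (T : nzRingType) (A Q : T -> Prop) : Prop :=
  [/\ prime_ideal Q, subP A Q &
      forall Q', prime_ideal Q' -> subP A Q' -> subP Q' Q -> subP Q Q'].

(* For R ⊆ S via the injective ring morphism f, and Q ⊆ R:
   SQ = left ideal of S generated by f(Q);
   Q^S = ann_S(S/SQ) = { s | s x ∈ SQ for all x ∈ S }. *)
Definition left_ext (R S : nzRingType) (f : R -> S) (Q : R -> Prop) : S -> Prop :=
  fun y => exists (n : nat) (s : nat -> S) (q : nat -> R),
    (forall i, (i < n)%N -> Q (q i)) /\ y = \sum_(i < n) s i * f (q i).

Definition ext_ann (R S : nzRingType) (f : R -> S) (Q : R -> Prop) : S -> Prop :=
  fun s => forall x : S, left_ext f Q (s * x).

(* Let A = P ∩ R and let N ⊇ A be the prime radical of R/A.  Since R/N is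
   semiprime Goldie, the ACC on left annihilators and noetherian induction on
   lann(X) give primes Q_1, ..., Q_k over N with Q_1 ⋯ Q_k ⊆ N; so every prime
   over N, i.e. every prime over A, contains some Q_i.  As N^m ⊆ A, the ideal
   N^S satisfies (N^S)^m S ⊆ S A ⊆ P, whence N^S ⊆ P; then
   Q_1^S ⋯ Q_k^S ⊆ N^S ⊆ P gives Q_i^S ⊆ P for some i.  A member Q_j ⊆ Q_i that
   is minimal in the family is a minimal prime over A, and Q_j^S ⊆ Q_i^S ⊆ P. *)

From mathcomp Require Import all_boot all_order all_algebra zify.
From Stdlib Require Import Classical ClassicalEpsilon.
Set Implicit Arguments. Unset Strict Implicit. Unset Printing Implicit Defensive.
Import GRing.Theory.
Local Open Scope ring_scope.

Lemma big_ord_recl_nat (A : Type) (idx : A) (op : A -> A -> A) n (F : nat -> A) :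
  \big[op/idx]_(i < n.+1) F i = op (F 0%N) (\big[op/idx]_(i < n) F i.+1).
Proof. by rewrite big_ord_recl; under eq_bigr do rewrite lift0. Qed.

Definition catf (A : Type) k (x y : nat -> A) i := if (i < k)%N then x i else y (i - k)%N.

Lemma catfL (A : Type) k (x y : nat -> A) i : (i < k)%N -> catf k x y i = x i.
Proof. by rewrite /catf => ->. Qed.

Lemma catfR (A : Type) k (x y : nat -> A) i : catf k x y (k + i) = y i.
Proof. by rewrite /catf ltnNge leq_addr addKn. Qed.

Lemma catf_forall (A : Type) (P : A -> Prop) k1 k2 (x y : nat -> A) :
  (forall i, (i < k1)%N -> P (x i)) -> (forall i, (i < k2)%N -> P (y i)) ->
  forall i, (i < k1 + k2)%N -> P (catf k1 x y i).
Proof.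
move=> Px Py i lt_i; rewrite /catf; case: ifP => [/Px //|ge_i].
by apply: Py; move/negbT: ge_i; lia.
Qed.

Section IdealFacts.
Variable T : nzRingType.
Implicit Types (I J N P U X : T -> Prop).

Definition left_closed X := forall a x, X x -> X (a * x).

Lemma ideal_left_ideal I : is_ideal I -> is_left_ideal I.
Proof. by case. Qed.

Lemma left_ideal_sum I n (x : nat -> T) :
  is_left_ideal I -> (forall i, (i < n)%N -> I (x i)) -> I (\sum_(i < n) x i).
Proof.
case=> I0 ID _ _; elim: n x => [|n IH] x Ix; first by rewrite big_ord0.
rewrite big_ord_recl_nat; apply: ID; first exact: (Ix 0%N).
by apply: (IH (fun i => x i.+1)) => i; apply: (Ix i.+1).
Qed.

Lemma ideal_prod_mem I n (x : nat -> T) i :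
  is_ideal I -> (i < n)%N -> I (x i) -> I (\prod_(j < n) x j).
Proof.
case=> _ _ _ Il Ir; elim: n x i => [|n IH] x [|i] // lt_in Ixi; rewrite big_ord_recl_nat.
  exact: Ir.
by apply: Il; apply: (IH (fun j => x j.+1) i).
Qed.

Lemma prime_ideal_prod P n (Js : nat -> T -> Prop) :
  prime_ideal P -> (forall i, (i < n)%N -> is_ideal (Js i)) ->
  (forall x : nat -> T, (forall i, (i < n)%N -> Js i (x i)) -> P (\prod_(i < n) x i)) ->
  exists2 i, (i < n)%N & subP (Js i) P.
Proof.
move=> [[P0 PD PN Pl Pr] P1 Pp]; elim: n Js => [|n IH] Js Jid JsP.
  by case: P1; have := JsP (fun _ => 0); rewrite big_ord0; apply.
have [_ _ _ _ Jr] := Jid 0%N isT.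
pose K y := forall j, Js 0%N j -> P (j * y).
have Kid : is_ideal K.
  split=> [j _|x y Kx Ky j Jj|x Kx j Jj|a x Kx j Jj|a x Kx j Jj].
  - by rewrite mulr0.
  - by rewrite mulrDr; apply: PD; [apply: Kx | apply: Ky].
  - by rewrite mulrN; apply: PN; apply: Kx.
  - by rewrite mulrA; apply: Kx; apply: Jr.
  - by rewrite mulrA; apply: Pr; apply: Kx.
case: (Pp (Js 0%N) K (Jid 0%N isT) Kid (fun j k Jj Kk => Kk j Jj)) => [J0P|KP].
  by exists 0%N.
have [i lt_in JiP] : exists2 i, (i < n)%N & subP (Js i.+1) P.
  apply: IH => [i lt_in|x Jx]; first exact: Jid.
  apply: KP => j Jj.
  pose xj i := if i is i'.+1 then x i' else j.
  by have := JsP xj; rewrite (big_ord_recl_nat _ _ n xj); apply; case.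
by exists i.+1.
Qed.

Definition ideal_add I J : T -> Prop := fun z => exists x y, [/\ I x, J y & z = x + y].

Lemma ideal_add_ideal I J : is_ideal I -> is_ideal J -> is_ideal (ideal_add I J).
Proof.
move=> [I0 ID IN Il Ir] [J0 JD JN Jl Jr].
split=> [|_ _ [x [y [Ix Jy ->]]] [x' [y' [Ix' Jy' ->]]]|_ [x [y [Ix Jy ->]]]|
          a _ [x [y [Ix Jy ->]]]|a _ [x [y [Ix Jy ->]]]].
- by exists 0, 0; rewrite addr0.
- by exists (x + x'), (y + y'); rewrite addrACA; split; [apply: ID | apply: JD |].
- by exists (- x), (- y); rewrite opprD; split; [apply: IN | apply: JN |].
- by exists (a * x), (a * y); rewrite mulrDr; split; [apply: Il | apply: Jl |].
- by exists (x * a), (y * a); rewrite mulrDl; split; [apply: Ir | apply: Jr |].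
Qed.

(* [semiprime_ideal] only speaks of ideals containing [N]; apply it to [J + N]. *)
Lemma semiprime_sub N J : semiprime_ideal N -> is_ideal J ->
  (forall a b, J a -> J b -> N (a * b)) -> subP J N.
Proof.
move=> [Nid Nsp] Jid JJ x Jx; have [N0 ND _ Nl Nr] := Nid; have [J0 _ _ _ _] := Jid.
apply: (Nsp (ideal_add J N)) => [||_ _ [a [n [Ja Nn ->]]] [b [n' [Jb Nn' ->]]]|].
- exact: ideal_add_ideal.
- by move=> n Nn; exists 0, n; rewrite add0r.
- rewrite mulrDl !mulrDr; apply: (ND); apply: (ND).
  + exact: JJ.
  + exact: Nl.
  + exact: Nr.
  + exact: Nl.
- by exists x, 0; rewrite addr0.
Qed.

Lemma semiprime_ideal_mulr_mull N U y : semiprime_ideal N -> is_ideal U ->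
  (forall u, U u -> N (u * y)) -> forall u, U u -> N (y * u).
Proof.
move=> Nsp [U0 UD UN Ul Ur] Uy u Uu; have [[N0 ND NN _ Nr] _] := Nsp.
pose J z := U z /\ forall v, U v -> N (v * z).
have Jid : is_ideal J.
  split=> [|x z [Ux Nx] [Uz Nz]|x [Ux Nx]|a x [Ux Nx]|a x [Ux Nx]]; split.
  - exact: U0.
  - by move=> v _; rewrite mulr0.
  - exact: UD.
  - by move=> v Uv; rewrite mulrDr; apply: ND; [apply: Nx | apply: Nz].
  - exact: UN.
  - by move=> v Uv; rewrite mulrN; apply: NN; apply: Nx.
  - exact: Ul.
  - by move=> v Uv; rewrite mulrA; apply: Nx; apply: Ur.
  - exact: Ur.
  - by move=> v Uv; rewrite mulrA; apply: Nr; apply: Nx.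
apply: (semiprime_sub Nsp Jid) => [a b [Ua _] [_ Nb]|]; first exact: Nb.
by split=> [|v Uv]; [apply: Ul | rewrite mulrA; apply: Nr; apply: Uy].
Qed.

Lemma lann_mod_ideal N X : is_ideal N -> left_closed X -> is_ideal (lann_mod N X).
Proof.
move=> [N0 ND NN Nl Nr] LX.
split=> [x _|y z Hy Hz x Xx|y Hy x Xx|a y Hy x Xx|a y Hy x Xx].
- by rewrite mul0r.
- by rewrite mulrDl; apply: ND; [apply: Hy | apply: Hz].
- by rewrite mulNr; apply: NN; apply: Hy.
- by rewrite -mulrA; apply: Nl; apply: Hy.
- by rewrite -mulrA; apply: Hy; apply: LX.
Qed.

Lemma not_prime_ideal P : is_ideal P -> ~ P 1 -> ~ prime_ideal P ->
  exists J K, [/\ is_ideal J, is_ideal K, (forall j k, J j -> K k -> P (j * k)),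
                  ~ subP J P & ~ subP K P].
Proof.
move=> Pid P1 nPp; apply: NNPP => noJK; apply: nPp; split=> // J K Jid Kid JKP.
apply: NNPP => nJK; apply: noJK; exists J, K.
by split=> // sub; apply: nJK; [left | right].
Qed.

Lemma prime_radical_semiprime I : semiprime_ideal (prime_radical_mod I).
Proof.
split=> [|J Jid NJ JJ x Jx Q Qp IQ].
  split=> [Q [[]]//|x y Nx Ny Q Qp IQ|x Nx Q Qp IQ|a x Nx Q Qp IQ|a x Nx Q Qp IQ];
    have [[_ QD QN Ql Qr] _ _] := Qp.
  - by apply: QD; [apply: Nx | apply: Ny].
  - by apply: QN; apply: Nx.
  - by apply: Ql; apply: Nx.
  - by apply: Qr; apply: Nx.
have [_ _ Qpr] := Qp.
by case: (Qpr J J Jid Jid (fun a b Ja Jb => JJ a b Ja Jb Q Qp IQ)) => JQ; apply: JQ.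
Qed.

Lemma minimal_prime_over_radical I Q :
  minimal_prime_over (prime_radical_mod I) Q -> minimal_prime_over I Q.
Proof.
case=> Qp NQ Qmin; split=> // [x Ix|Q' Q'p IQ']; first by apply: NQ => P _; apply.
by apply: Qmin => // x Nx; apply: Nx.
Qed.

End IdealFacts.

Lemma ideal_rev (T : nzRingType) (I : T -> Prop) : @is_ideal T I -> @is_ideal T^c I.
Proof. by case=> *; split. Qed.

Lemma prime_ideal_rev (T : nzRingType) (P : T -> Prop) :
  @prime_ideal T P -> @prime_ideal T^c P.
Proof.
case=> Pid P1 Pp; split=> // [|J K Jid Kid JKP]; first exact: ideal_rev.
have [KP|JP] := Pp K J (@ideal_rev T^c _ Kid) (@ideal_rev T^c _ Jid)
  (fun k j Kk Jj => JKP j k Jj Kk); [by right | by left].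
Qed.

Lemma semiprime_ideal_rev (T : nzRingType) (N : T -> Prop) :
  @semiprime_ideal T N -> @semiprime_ideal T^c N.
Proof.
case=> Nid Nsp; split=> [|J Jid NJ JJ]; first exact: ideal_rev.
by apply: Nsp (@ideal_rev T^c _ Jid) NJ _ => a b Ja Jb; apply: JJ.
Qed.

Lemma semiprime_ideal_mull_mulr (T : nzRingType) (N U : T -> Prop) y :
  semiprime_ideal N -> is_ideal U ->
  (forall u, U u -> N (y * u)) -> forall u, U u -> N (u * y).
Proof.
by move=> Nsp Uid; apply: (@semiprime_ideal_mulr_mull T^c);
  [apply: semiprime_ideal_rev | apply: ideal_rev].
Qed.

Section PrimeCover.
Variables (T : nzRingType) (N : T -> Prop).
Implicit Types (X : T -> Prop) (Qs : nat -> T -> Prop).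

Definition lann_acc := forall X : nat -> (T -> Prop),
  (forall n, subP (lann_mod N (X n)) (lann_mod N (X n.+1))) ->
  exists n0, forall n, (n0 <= n)%N -> subP (lann_mod N (X n)) (lann_mod N (X n0)).

Definition lann_lt X X' :=
  subP (lann_mod N X) (lann_mod N X') /\ ~ subP (lann_mod N X') (lann_mod N X).

Lemma lann_acc_ind (Phi : (T -> Prop) -> Prop) : lann_acc ->
  (forall X, left_closed X ->
     (forall X', left_closed X' -> lann_lt X X' -> Phi X') -> Phi X) ->
  forall X, left_closed X -> Phi X.
Proof.
(* A counterexample would, by dependent choice, yield a strictly increasing chain. *)
move=> Nacc IH X0 LX0; apply: NNPP => nPhi0.
pose bad X := left_closed X /\ ~ Phi X.
have next X : bad X -> exists X', bad X' /\ lann_lt X X'.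
  case=> LX nPhi; apply: NNPP => nnext; apply: nPhi; apply: IH => // X' LX' ltXX'.
  by apply: NNPP => nPhi'; apply: nnext; exists X'.
pose succ X := epsilon (inhabits X0) (fun X' => bad X' /\ lann_lt X X').
pose chain := fix chain n := if n is n'.+1 then succ (chain n') else X0.
have chain_bad n : bad (chain n).
  by elim: n => [|n /next/(epsilon_spec (inhabits X0)) []].
have chain_lt n : lann_lt (chain n) (chain n.+1).
  exact: (epsilon_spec (inhabits X0) _ (next _ (chain_bad n))).2.
have [n0 stable] := Nacc chain (fun n => (chain_lt n).1).
by case: (chain_lt n0) => _; apply; apply: stable.
Qed.

Definition primes_annihilate X := exists k Qs,
  (forall i, (i < k)%N -> prime_ideal (Qs i) /\ subP N (Qs i)) /\
  forall q : nat -> T, (forall i, (i < k)%N -> Qs i (q i)) ->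
    lann_mod N X (\prod_(i < k) q i).

Definition prime_cover k Qs :=
  (forall i, (i < k)%N -> prime_ideal (Qs i) /\ subP N (Qs i)) /\
  forall P, prime_ideal P -> subP N P -> exists2 i, (i < k)%N & subP (Qs i) P.

Hypothesis Nsp : semiprime_ideal N.

Lemma lann_mod_not_prime X : left_closed X ->
  ~ lann_mod N X 1 -> ~ prime_ideal (lann_mod N X) ->
  exists X1 X2, [/\ left_closed X1, left_closed X2, lann_lt X X1, lann_lt X X2 &
    forall b1 b2, lann_mod N X1 b1 -> lann_mod N X2 b2 -> lann_mod N X (b1 * b2)].
Proof.
(* With J K ⊆ lann X, take X1 = K X and X2 = X lann(X1): then J ⊆ lann X1, K ⊆ lann X2. *)
move=> LX nB1 nBp; have Nid := Nsp.1; have [_ _ _ _ Nr] := Nid.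
have [J [K [Jid [_ _ _ Kl _] JKB nJB nKB]]] :=
  not_prime_ideal (lann_mod_ideal Nid LX) nB1 nBp.
pose X1 y := exists k x, [/\ K k, X x & y = k * x].
pose X2 y := exists x b, [/\ X x, lann_mod N X1 b & y = x * b].
have LX1 : left_closed X1.
  by move=> a _ [k [x [Kk Xx ->]]]; exists (a * k), x; rewrite mulrA; split=> //; apply: Kl.
have LX2 : left_closed X2.
  by move=> a _ [x [b [Xx Bb ->]]]; exists (a * x), b; rewrite mulrA; split=> //; apply: LX.
have B1id := lann_mod_ideal Nid LX1.
exists X1, X2; split=> //.
- split=> [y By _ [k [x [Kk Xx ->]]]|B1B]; first by apply: By; apply: LX.
  by apply: nJB => j Jj; apply: B1B => _ [k [x [Kk Xx ->]]]; rewrite mulrA; apply: JKB.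
- split=> [y By _ [x [b [Xx Bb ->]]]|B2B]; first by rewrite mulrA; apply: Nr; apply: By.
  apply: nKB => k Kk; apply: B2B => _ [x [b [Xx Bb ->]]]; rewrite mulrA.
  by apply: (semiprime_ideal_mulr_mull Nsp B1id) => // b' B1b'; apply: B1b'; exists k, x.
- move=> b1 b2 B1b1 B2b2 x Xx; rewrite -mulrA.
  apply: (semiprime_ideal_mull_mulr Nsp B1id) => // b B1b.
  by rewrite -mulrA; apply: B2b2; exists x, b.
Qed.

Lemma primes_annihilate_left_closed X : lann_acc -> left_closed X -> primes_annihilate X.
Proof.
move=> Nacc; move: X; apply: (lann_acc_ind Nacc) => X LX IH.
have [_ _ _ _ Nr] := Nsp.1.
have [B1|nB1] := classic (lann_mod N X 1).
  by exists 0%N, (fun _ => N); split=> // q _; rewrite big_ord0.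
have [Bp|nBp] := classic (prime_ideal (lann_mod N X)).
  exists 1%N, (fun _ => lann_mod N X); split=> [i _|q Xq].
    by split=> // n Nn x _; apply: Nr.
  by rewrite big_ord1; apply: Xq.
have [X1 [X2 [LX1 LX2 lt1 lt2 B12]]] := lann_mod_not_prime LX nB1 nBp.
have [k1 [Q1 [Q1p Q1X]]] := IH X1 LX1 lt1.
have [k2 [Q2 [Q2p Q2X]]] := IH X2 LX2 lt2.
exists (k1 + k2)%N, (catf k1 Q1 Q2); split=> [|q Qq].
  exact: (@catf_forall _ (fun Q => prime_ideal Q /\ subP N Q) k1 k2 _ _ Q1p Q2p).
rewrite big_split_ord /=; apply: B12.
  by apply: Q1X => i lt_i; rewrite -(catfL Q1 Q2 lt_i); apply: Qq; apply: ltn_addr.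
apply: (Q2X (fun i => q (k1 + i)%N)) => i lt_i.
by rewrite -(catfR k1 Q1); apply: Qq; rewrite ltn_add2l.
Qed.

Lemma lann_acc_prime_cover : lann_acc -> exists k Qs, prime_cover k Qs.
Proof.
move=> Nacc; have [k [Qs [Qsp QsN]]] :=
  primes_annihilate_left_closed (X := fun _ => True) Nacc (fun _ _ _ => I).
exists k, Qs; split=> // P Pp NP.
apply: prime_ideal_prod => // [i /Qsp [[]] //|x Qx].
by apply: NP; rewrite -[X in N X]mulr1; apply: QsN.
Qed.

End PrimeCover.

Lemma goldie_prime_cover (T : nzRingType) (N : T -> Prop) : semiprime_ideal N ->
  left_goldie_mod N \/ right_goldie_mod N -> exists k Qs, prime_cover N k Qs.
Proof.
move=> Nsp [[Nacc _]|[Nacc _]]; first exact: lann_acc_prime_cover.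
have [k [Qs [Qsp Qscov]]] :=
  @lann_acc_prime_cover T^c N (semiprime_ideal_rev Nsp) Nacc.
exists k, Qs; split=> [i /Qsp [/(@prime_ideal_rev T^c) Qip NQi] //|P Pp NP].
exact: Qscov (prime_ideal_rev Pp) NP.
Qed.

Lemma finite_minimal_below (le : nat -> nat -> Prop) k :
  (forall i, le i i) -> (forall i j l, le i j -> le j l -> le i l) ->
  forall i, (i < k)%N ->
  exists2 j, (j < k)%N & le j i /\ forall l, (l < k)%N -> le l j -> le j l.
Proof.
move=> le_refl le_trans; elim: k => [//|k IH] i lt_ik.
have below (i' : nat) : (i' < k)%N -> le i' i -> exists2 j, (j < k.+1)%N &
    le j i /\ forall l, (l < k.+1)%N -> le l j -> le j l.
  move=> lt_i'k le_i'i; have [j lt_jk [le_ji' min_j]] := IH i' lt_i'k.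
  have le_ji := le_trans _ _ _ le_ji' le_i'i.
  have [[le_kj nle_jk]|] := classic (le k j /\ ~ le j k).
    exists k => //; split=> [|l]; first exact: le_trans le_kj le_ji.
    rewrite ltnS leq_eqVlt => /orP[/eqP-> //|lt_lk] le_lk; apply: NNPP => _.
    by apply: nle_jk; apply: le_trans (min_j l lt_lk (le_trans _ _ _ le_lk le_kj)) le_lk.
  move=> not_below; exists j; [exact: leqW | split=> // l].
  rewrite ltnS leq_eqVlt => /orP[/eqP->|/min_j //] le_kj.
  by apply: NNPP => nle_jk; apply: not_below.
have [lt_i|ge_i] := ltnP i k; first exact: below i lt_i (le_refl i).
have e_ik : i = k by apply/eqP; rewrite eqn_leq ge_i -ltnS lt_ik.
subst i; have [min_k|nmin_k] := classic (forall l, (l < k.+1)%N -> le l k -> le k l).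
  by exists k.
have [l lt_lk [le_lk nle_kl]] : exists2 l, (l < k.+1)%N & le l k /\ ~ le k l.
  apply: NNPP => nl; apply: nmin_k => l lt_lk le_lk.
  by apply: NNPP => nle_kl; apply: nl; exists l.
have lt_l : (l < k)%N.
  by move: lt_lk; rewrite ltnS leq_eqVlt => /orP[/eqP el|//]; case: nle_kl; rewrite -el.
exact: below lt_l le_lk.
Qed.

Lemma prime_cover_minimal (T : nzRingType) (N : T -> Prop) k Qs i :
  prime_cover N k Qs -> (i < k)%N ->
  exists2 j, subP (Qs j) (Qs i) & minimal_prime_over N (Qs j).
Proof.
move=> [Qsp Qscov] lt_ik.
have [j lt_jk [sub_ji min_j]] := @finite_minimal_below (fun a b => subP (Qs a) (Qs b))
  k (fun _ _ => id) (fun _ _ _ sab sbc x Qx => sbc x (sab x Qx)) i lt_ik.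
exists j => //; have [Qjp NQj] := Qsp j lt_jk; split=> // Q' Q'p NQ' sub_Q'j.
have [l lt_lk sub_lQ'] := Qscov Q' Q'p NQ'.
by move=> x /(min_j l lt_lk (fun y Qy => sub_Q'j y (sub_lQ' y Qy))); apply: sub_lQ'.
Qed.

Lemma prime_cover_radical_prod (T : nzRingType) (I : T -> Prop) k Qs (q : nat -> T) :
  prime_cover (prime_radical_mod I) k Qs -> (forall i, (i < k)%N -> Qs i (q i)) ->
  prime_radical_mod I (\prod_(i < k) q i).
Proof.
move=> [_ Qscov] Qq Q Qp IQ; have [Qid _ _] := Qp.
have [j lt_jk sub_jQ] := Qscov Q Qp (fun x Nx => Nx Q Qp IQ).
exact: ideal_prod_mem Qid lt_jk (sub_jQ _ (Qq j lt_jk)).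
Qed.

Section Extension.
Variables (R S : nzRingType) (f : {rmorphism R -> S}).
Implicit Types (Y Z : R -> Prop).

Lemma ideal_preimage (I : S -> Prop) : is_ideal I -> is_ideal (fun r => I (f r)).
Proof.
move=> [I0 ID IN Il Ir]; split=> [|x y|x|a x|a x];
  rewrite ?rmorph0 ?rmorphD ?rmorphN ?rmorphM //; [exact: ID | exact: IN | exact: Il | exact: Ir].
Qed.

Lemma left_ext_left_ideal Z : is_left_ideal (left_ext f Z).
Proof.
have lmul a y : left_ext f Z y -> left_ext f Z (a * y).
  move=> [n [s [q [Zq ->]]]]; exists n, (fun i => a * s i), q; split=> //.
  by rewrite big_distrr; apply: eq_bigr => i _; rewrite /= mulrA.
split=> // [|_ _ [n1 [s1 [q1 [Zq1 ->]]]] [n2 [s2 [q2 [Zq2 ->]]]]|y /(lmul (-1))].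
- by exists 0%N, (fun _ => 0), (fun _ => 0); rewrite big_ord0.
- exists (n1 + n2)%N, (catf n1 s1 s2), (catf n1 q1 q2); split.
    exact: (@catf_forall _ Z n1 n2 _ _ Zq1 Zq2).
  rewrite big_split_ord /=; congr (_ + _); apply: eq_bigr => i _.
    by rewrite !catfL.
  by rewrite !catfR.
- by rewrite mulN1r.
Qed.

Lemma left_ext_mono Y Z : subP Y Z -> subP (left_ext f Y) (left_ext f Z).
Proof. by move=> YZ _ [n [s [q [Yq ->]]]]; exists n, s, q; split=> // i /Yq /YZ. Qed.

Lemma left_ext_sub (L : S -> Prop) Z : is_left_ideal L -> (forall r, Z r -> L (f r)) ->
  subP (left_ext f Z) L.
Proof.
move=> Lid ZL _ [n [s [q [Zq ->]]]].
apply: (left_ideal_sum (x := fun i => s i * f (q i))) => // i lt_in.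
by case: Lid => _ _ _ Ll; apply: Ll; apply: ZL; apply: Zq.
Qed.

Lemma ext_ann_ideal Z : is_ideal (ext_ann f Z).
Proof.
have [L0 LD LN Ll] := left_ext_left_ideal Z.
split=> [x|s t Zs Zt x|s Zs x|a s Zs x|a s Zs x].
- by rewrite mul0r.
- by rewrite mulrDl; apply: LD.
- by rewrite mulNr; apply: LN.
- by rewrite -mulrA; apply: Ll.
- by rewrite -mulrA; apply: Zs.
Qed.

Lemma ext_ann_mono Y Z : subP Y Z -> subP (ext_ann f Y) (ext_ann f Z).
Proof. by move=> YZ s Ys x; apply: left_ext_mono YZ _ (Ys x). Qed.

Definition mul_set Y Z : R -> Prop := fun r => exists y z, [/\ Y y, Z z & r = y * z].

Lemma ext_ann_mul Y Z s y :
  ext_ann f Y s -> left_ext f Z y -> left_ext f (mul_set Y Z) (s * y).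
Proof.
move=> Ys [n [t [q [Zq ->]]]]; rewrite big_distrr.
apply: (left_ideal_sum (x := fun i => s * (t i * f (q i)))) => [|i lt_in].
  exact: left_ext_left_ideal.
rewrite mulrA.
have [m [u [p [Yp ->]]]] := Ys (t i); exists m, u, (fun j => p j * q i); split.
  by move=> j lt_jm; exists (p j), (q i); split=> //; [apply: Yp | apply: Zq].
by rewrite big_distrl; apply: eq_bigr => j _; rewrite /= rmorphM mulrA.
Qed.

Definition prod_set k (Zs : nat -> R -> Prop) : R -> Prop :=
  fun r => exists q : nat -> R, (forall i, (i < k)%N -> Zs i (q i)) /\ r = \prod_(i < k) q i.

Lemma ext_ann_prod k (Zs : nat -> R -> Prop) (s : nat -> S) :
  (forall i, (i < k)%N -> ext_ann f (Zs i) (s i)) ->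
  ext_ann f (prod_set k Zs) (\prod_(i < k) s i).
Proof.
elim: k Zs s => [|k IH] Zs s Zss x.
  rewrite big_ord0 mul1r; exists 1%N, (fun _ => x), (fun _ => 1); split.
    by move=> i _; exists (fun _ => 0); rewrite big_ord0.
  by rewrite big_ord1 rmorph1 mulr1.
rewrite big_ord_recl_nat -mulrA.
have := ext_ann_mul (Zss 0%N isT) (IH (fun i => Zs i.+1) (fun i => s i.+1) (fun i => Zss i.+1) x).
apply: left_ext_mono => _ [z [_ [Zz [q [Zq ->]] ->]]].
pose zq i := if i is i'.+1 then q i' else z.
by exists zq; split=> [[|i]|]; rewrite ?(big_ord_recl_nat _ _ k zq) //; apply: Zq.
Qed.

Lemma ext_ann_sub_prime (P : S -> Prop) Z m : prime_ideal P ->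
  (forall q : nat -> R, (forall i, (i < m)%N -> Z (q i)) -> P (f (\prod_(i < m) q i))) ->
  subP (ext_ann f Z) P.
Proof.
move=> Pp ZmP; have [Pid _ _] := Pp.
have [i _ //] : exists2 i, (i < m)%N & subP (ext_ann f Z) P.
apply: (prime_ideal_prod (Js := fun _ => ext_ann f Z)) => // [i _|s Zs].
  exact: ext_ann_ideal.
rewrite -[X in P X]mulr1; apply: left_ext_sub (ext_ann_prod Zs 1).
  exact: ideal_left_ideal.
by move=> _ [q [Zq ->]]; apply: ZmP.
Qed.

End Extension.

Theorem lemma3p14 (R S : nzRingType) (f : {rmorphism R -> S}) :
  injective f ->
  goldie_hyp R -> goldie_hyp S -> nilradical_hyp R -> nilradical_hyp S ->
  forall P : S -> Prop, prime_ideal P ->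
  exists Q : R -> Prop,
    minimal_prime_over (fun r => P (f r)) Q /\ subP (ext_ann f Q) P.
Proof.
move=> _ goldieR _ nilR _ P Pp; pose A r := P (f r).
have Aid : is_ideal A by apply: ideal_preimage; case: Pp.
have Nsp := prime_radical_semiprime A.
have [k [Qs Qcover]] := goldie_prime_cover Nsp (goldieR _ Nsp).
have NP : subP (ext_ann f (prime_radical_mod A)) P.
  by have [m Nm] := nilR A Aid; apply: ext_ann_sub_prime Pp Nm.
have [i lt_ik QiP] : exists2 i, (i < k)%N & subP (ext_ann f (Qs i)) P.
  apply: (prime_ideal_prod (Js := fun i => ext_ann f (Qs i))) => // [i _|s Qs_s].
    exact: ext_ann_ideal.
  apply: NP; apply: ext_ann_mono (ext_ann_prod Qs_s) => _ [q [Qq ->]].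
  exact: prime_cover_radical_prod Qcover Qq.
have [j sub_ji Qj_min] := prime_cover_minimal Qcover lt_ik.
exists (Qs j); split; first exact: minimal_prime_over_radical.
by move=> s /(ext_ann_mono sub_ji)/QiP.
Qed.
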